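(* Let $\nu$ be a compactly supported probability measure on $\mathbb{R}$ with infinite support, let $\beta\in\mathbb{R}$, $\gamma>0$, and let $\mu = \Phi_{\beta,\gamma}[\nu]$. Let $\{P^\mu_n\}_{n\ge0}$ be the monic orthogonal polynomials of $\mu$. Then, for the operator \[ Q = L_\nu L_\mu - \gamma^{-1}(x - \beta) L_\mu \] on $\mathbb{R}[x]$, one has $Q[P^\mu_n] = -\gamma^{-1} P^\mu_n$ for all $n \ge 1$ (and $Q[P^\mu_0] = 0$). Equivalently, $Q[f] = \gamma^{-1}\bigl(-f + \int f\,d\mu\bigr)$ for every polynomial $f$.
   Context: $L_\mu[f](x) = \int \frac{f(x)-f(y)}{x-y}\,d\mu(y)$ on polynomials. For a probability measure $\nu$, $\beta\in\mathbb{R}$, $\gamma>0$, $\Phi_{\beta,\gamma}[\nu]$ is the probability measure $\mu$ with Cauchy transform $G_\mu(z) = 1/(z-\beta-\gamma G_\nu(z))$, where $G_\mu(z)=\int\frac{d\mu(x)}{z-x}$; equivalently, if $\nu$ has Jacobi parameters $(\beta_0,\beta_1,\dots),(\gamma_1,\gamma_2,\dots)$ (meaning its monic orthogonal polynomials satisfy $xP_n = P_{n+1}+\beta_nP_n+\gamma_nP_{n-1}$), then $\mu$ has Jacobi parameters $(\beta,\beta_0,\beta_1,\dots),(\gamma,\gamma_1,\gamma_2,\dots)$. *)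

From HB Require Import structures.
From mathcomp Require Import all_boot all_order all_algebra.
Set Implicit Arguments. Unset Strict Implicit. Unset Printing Implicit Defensive.
Import Order.TTheory GRing.Theory Num.Theory.
Local Open Scope ring_scope.

(* A measure is represented by its moment sequence  s n = \int x^n d(measure). *)

(* \int f d(measure) for a polynomial f *)
Definition integ (R : nzRingType) (s : nat -> R) (f : {poly R}) : R :=
  \sum_(k < size f) f`_k * s k.

(* L_s[f](x) = \int (f(x)-f(y))/(x-y) ds(y); since
   (x^k - y^k)/(x-y) = \sum_(j<k) x^j y^(k-1-j), this is *)
Definition Lop (R : nzRingType) (s : nat -> R) (f : {poly R}) : {poly R} :=
  \sum_(k < size f) f`_k *: \sum_(j < k) s (k.-1 - j)%N *: 'X^(nat_of_ord j).

(* Moments of Phi_{beta,gamma}[nu], from the Cauchy transform identity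
   G_mu(z) (z - beta - gamma G_nu(z)) = 1 read as formal power series in 1/z
   (G(z) = \sum_n m_n z^(-n-1)):
     m_0 = 1,  m_{n+1} = beta m_n + gamma \sum_{i+j = n-1} m_i s_j.
   phi_seq n = [:: m_0; ...; m_n]. *)
Fixpoint phi_seq (R : nzRingType) (beta gamma : R) (s : nat -> R) (n : nat)
  : seq R :=
  match n with
  | 0 => [:: 1]
  | n'.+1 =>
      let t := phi_seq beta gamma s n' in
      rcons t (beta * t`_n' + gamma * \sum_(i < n') t`_i * s (n'.-1 - i)%N)
  end.

Definition phi_mom (R : nzRingType) (beta gamma : R) (s : nat -> R) (n : nat) : R :=
  (phi_seq beta gamma s n)`_n.

Definition cs_prob_inf_supp_moments (R : realFieldType) (s : nat -> R) : Prop :=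
  [/\ s 0%N = 1,
      (forall p : {poly R}, p != 0 -> 0 < integ s (p * p)) &
      exists C r : R, forall n, `|s n| <= C * r ^+ n].

Definition monic_OP (R : nzRingType) (m : nat -> R) (n : nat) (P : {poly R}) : Prop :=
  [/\ size P = n.+1, P \is monic &
      forall k, (k < n)%N -> integ m (P * 'X^k) = 0].

(** The identity [gamma L_nu L_mu f - (x - beta) L_mu f = \int f dmu - f] is
    linear in [f], so it suffices to check it on monomials [x^k], by induction
    on [k]: the difference quotient satisfies [L[x g] = x L[g] + \int g], and
    the moment recurrence defining [mu = Phi_{beta,gamma}[nu]] is exactly what
    makes the induction step close.  For a monic orthogonal polynomial [P_n]
    with [n >= 1] orthogonality against [1] gives [\int P_n dmu = 0].  The
    argument is purely algebraic: no property of [nu] beyond its moments is used. *)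
From HB Require Import structures.
From mathcomp Require Import all_boot all_order all_algebra.
From mathcomp Require Import zify ring.
Import Order.TTheory GRing.Theory Num.Theory.
Local Open Scope ring_scope.

Lemma poly_sumXn (R : nzSemiRingType) (f : {poly R}) :
  f = \sum_(k < size f) f`_k *: 'X^k.
Proof. by rewrite -poly_def coefK. Qed.

Section CoefLinear.
Context {R : nzRingType} {V : lmodType R} (G : nat -> V).

Definition coef_lin (f : {poly R}) : V := \sum_(k < size f) f`_k *: G k.

Lemma coef_linE N (f : {poly R}) : (size f <= N)%N ->
  coef_lin f = \sum_(k < N) f`_k *: G k.
Proof.
move=> le_fN; rewrite /coef_lin (big_ord_widen N (fun k => f`_k *: G k) le_fN).
rewrite big_mkcond; apply: eq_bigr => k _; case: ifP => // /negbT.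
by rewrite -leqNgt => /(nth_default 0) ->; rewrite scale0r.
Qed.

Lemma coef_lin_is_linear : linear coef_lin.
Proof.
move=> a f g; set N := maxn (size f) (size g).
have le_N : (size (a *: f + g)%R <= N)%N.
  apply: leq_trans (size_polyD _ _) _; rewrite geq_max leq_maxr andbT.
  exact: leq_trans (size_scale_leq _ _) (leq_maxl _ _).
rewrite (coef_linE _ _ le_N) (coef_linE N f (leq_maxl _ _)).
rewrite (coef_linE N g (leq_maxr _ _)).
rewrite scaler_sumr -big_split; apply: eq_bigr => k _.
by rewrite coefD coefZ scalerDl scalerA.
Qed.

HB.instance Definition _ :=
  GRing.isLinear.Build R {poly R} V _ coef_lin coef_lin_is_linear.

Lemma coef_linXn n : coef_lin 'X^n = G n.
Proof.
rewrite (coef_linE n.+1 'X^n) ?size_polyXn // big_ord_recr /= coefXn eqxx.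
by rewrite scale1r big1 ?add0r // => i _; rewrite coefXn ltn_eqF ?scale0r.
Qed.

End CoefLinear.

Section DifferenceQuotient.
Context {R : comNzRingType}.
Implicit Types (s : nat -> R) (f g : {poly R}).

Definition Lmono s k : {poly R} := \sum_(j < k) s (k.-1 - j)%N *: 'X^j.

HB.instance Definition _ s :=
  GRing.isLinear.Build R {poly R} {poly R} _ (Lop s)
    (coef_lin_is_linear (Lmono s)).

HB.instance Definition _ s :=
  GRing.isLinear.Build R {poly R} R^o _ (integ s)
    (coef_lin_is_linear (s : nat -> R^o)).

Lemma LopXn s n : Lop s 'X^n = Lmono s n.
Proof. exact: coef_linXn. Qed.

Lemma integXn s n : integ s 'X^n = s n.
Proof. exact: (coef_linXn (s : nat -> R^o)). Qed.

Lemma Lmono0 s : Lmono s 0 = 0.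
Proof. by rewrite /Lmono big_ord0. Qed.

Lemma LmonoS s k : Lmono s k.+1 = 'X * Lmono s k + (s k)%:P.
Proof.
rewrite /Lmono big_ord_recl /= subn0 expr0 -alg_polyC addrC; congr (_ + _).
rewrite mulr_sumr; apply: eq_bigr => j _ /=.
by rewrite -scalerAr -exprS /bump leq0n add1n; congr (s _ *: _); lia.
Qed.

Lemma Lop_polyC s c : Lop s c%:P = 0.
Proof. by rewrite -[c%:P]mulr1 mul_polyC -(expr0 'X) linearZ /= LopXn Lmono0 scaler0. Qed.

Lemma LopMX s g : Lop s ('X * g) = 'X * Lop s g + (integ s g)%:P.
Proof.
rewrite [g]poly_sumXn mulr_sumr !linear_sum mulr_sumr rmorph_sum -big_split /=.
apply: eq_bigr => i _; rewrite -scalerAr -exprS !linearZ /=.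
rewrite !LopXn integXn LmonoS scalerDr scalerAr; congr (_ + _).
by rewrite -mul_polyC -polyCM.
Qed.

Lemma integ_Lmono s m k : integ s (Lmono m k) = \sum_(i < k) m i * s (k.-1 - i)%N.
Proof.
rewrite /Lmono linear_sum (reindex_inj rev_ord_inj) /=; apply: eq_bigr => i _.
rewrite linearZ /= integXn; have := ltn_ord i; move: (nat_of_ord i) => j lt_jk.
by rewrite /GRing.scale /=; congr (m _ * s _); lia.
Qed.

End DifferenceQuotient.

Section PhiMoments.
Context {R : nzRingType} (beta gamma : R) (s : nat -> R).
Local Notation m := (phi_mom beta gamma s).

Lemma size_phi_seq n : size (phi_seq beta gamma s n) = n.+1.
Proof. by elim: n => //= n IH; rewrite size_rcons IH. Qed.

Lemma nth_phi_seq n i : (i <= n)%N -> (phi_seq beta gamma s n)`_i = m i.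
Proof.
elim: n => [|n IH]; first by rewrite leqn0 => /eqP ->.
rewrite leq_eqVlt => /orP[/eqP -> //|lt_in] /=.
by rewrite nth_rcons size_phi_seq lt_in IH.
Qed.

Lemma phi_mom0 : m 0 = 1.
Proof. by []. Qed.

Lemma phi_momS k :
  m k.+1 = beta * m k + gamma * \sum_(i < k) m i * s (k.-1 - i)%N.
Proof.
rewrite /phi_mom /= nth_rcons size_phi_seq ltnn eqxx nth_phi_seq //.
by congr (_ + _ * _); apply: eq_bigr => i _; rewrite nth_phi_seq // ltnW.
Qed.

End PhiMoments.

Section PhiIdentity.
Context {R : comNzRingType} (beta gamma : R) (s : nat -> R).
Local Notation m := (phi_mom beta gamma s).

Lemma Lop_phi_momXn k :
  gamma *: Lop s (Lop m 'X^k) - ('X - beta%:P) * Lop m 'X^k = (m k)%:P - 'X^k.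
Proof.
rewrite LopXn; elim: k => [|k IH].
  by rewrite Lmono0 linear0 scaler0 mulr0 subrr phi_mom0 expr0 subrr.
rewrite LmonoS linearD /= Lop_polyC addr0 LopMX phi_momS -integ_Lmono.
have {}IH : gamma *: Lop s (Lmono m k) = (m k)%:P - 'X^k + ('X - beta%:P) * Lmono m k.
  by rewrite -IH addrNK.
rewrite scalerDr scalerAr {}IH -!mul_polyC !polyCD !polyCM exprS.
ring.
Qed.

Lemma Lop_phi_mom f :
  gamma *: Lop s (Lop m f) - ('X - beta%:P) * Lop m f = (integ m f)%:P - f.
Proof.
have -> : (integ m f)%:P - f = \sum_(k < size f) f`_k *: ((m k)%:P - 'X^k).
  rewrite [X in _ - X = _]poly_sumXn rmorph_sum -sumrB; apply: eq_bigr => k _.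
  by rewrite scalerBr rmorphM /= mul_polyC.
rewrite -[Lop m f]/(\sum_(k < size f) f`_k *: Lmono m k) (linear_sum (Lop s)).
rewrite scaler_sumr mulr_sumr -sumrB; apply: eq_bigr => k _.
rewrite -LopXn -Lop_phi_momXn linearZ /= scalerBr !scalerA mulrC -!scalerA.
by rewrite scalerAr.
Qed.

End PhiIdentity.

Theorem proposition4p4 (R : realFieldType) (s : nat -> R) (beta gamma : R) :
  cs_prob_inf_supp_moments s -> 0 < gamma ->
  let m := phi_mom beta gamma s in
  let Q := fun f : {poly R} =>
    Lop s (Lop m f) - gamma^-1 *: (('X - beta%:P) * Lop m f) in
  (forall (n : nat) (P : {poly R}), (1 <= n)%N -> monic_OP m n P ->
     Q P = - gamma^-1 *: P)
  /\ (forall P : {poly R}, monic_OP m 0 P -> Q P = 0)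
  /\ (forall f : {poly R}, Q f = gamma^-1 *: (- f + (integ m f)%:P)).
Proof.
move=> _ gamma_gt0 m Q.
have QE f : Q f = gamma^-1 *: (- f + (integ m f)%:P).
  rewrite addrC -(Lop_phi_mom beta gamma s f) scalerBr scalerA.
  by rewrite mulVf ?gt_eqF // scale1r.
split; last split => //.
  move=> n P n_gt0 [_ _ orthP]; rewrite QE.
  by have := orthP 0%N n_gt0; rewrite expr0 mulr1 => ->; rewrite addr0 scalerN scaleNr.
move=> P [sizeP /monicP]; rewrite lead_coefE sizeP => P0 _.
rewrite QE [P]size1_polyC ?sizeP // P0 polyC1 -(expr0 'X) integXn /m phi_mom0.
by rewrite expr0 polyC1 addNr scaler0.
Qed.
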